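(* Let $b\ge2$, $d\ge1$, $\Lambda_b=\{0,1,\dots,b-1\}^d$, and let $T$ be a supercritical Galton–Watson tree with alphabet $\Lambda_b$ and binomial offspring distribution with parameter $p$. For $k\ge2$ let $\mathscr{D}_{b,k}=\{X\subseteq(\Lambda_b)^k:\exists a\in(\Lambda_b)^{k-2},\ a(\Lambda_b)^2\subseteq X\}$ and $g_{\mathscr{D}_{b,k}}(s)=\mathbb{P}(T_k^{(s)}\notin\mathscr{D}_{b,k})$. Then for every $s\in(0,1)$, $g_{\mathscr{D}_{b,k}}(s)\to\mathbb{P}(\text{extinction})$ as $k\to\infty$.
   Context: The Galton–Watson tree with offspring distribution $W$, where $\mathbb{P}(W=B)=p^{|B|}(1-p)^{|\Lambda_b\setminus B|}$ for $B\subseteq\Lambda_b$, is $T_0=\{\emptyset\}$, $T_n=\{aj:a\in T_{n-1},j\in W_a\}$ with independent copies $W_a$; supercritical means $pb^d>1$; extinction means $T_n=\emptyset$ for some $n$. $a(\Lambda_b)^2=\{aj:j\in(\Lambda_b)^2\}$. $T_k^{(s)}=T_k\cap Y$ with $Y\subseteq(\Lambda_b)^k$ independent of $T$, $\mathbb{P}(Y=B)=(1-s)^{|B|}s^{|(\Lambda_b)^k\setminus B|}$. *)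

From HB Require Import structures.
From mathcomp Require Import all_boot all_order all_algebra.
From mathcomp Require Import all_classical all_reals all_analysis.
Set Implicit Arguments. Unset Strict Implicit. Unset Printing Implicit Defensive.
Import Order.TTheory GRing.Theory Num.Theory.
Import numFieldNormedType.Exports.
Local Open Scope ring_scope.

Definition Lam (b d : nat) : finType := {ffun 'I_d -> 'I_b}.

Definition Node (b d n : nat) : finType := {i : 'I_n & i.-tuple (Lam b d)}.

(* A realisation of the offspring sets W_a for all words a with |a| < n *)
Definition Conf (b d n : nat) : finType := {ffun Node b d n -> {set Lam b d}}.

(* The offspring set W_a of a word a (given as a sequence); empty if |a| >= n *)
Definition Woff b d n (F : Conf b d n) (a : seq (Lam b d)) : {set Lam b d} :=
  [set j | [exists v : Node b d n, (val (tagged v) == a) && (j \in F v)]].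

Fixpoint Tgen b d n (F : Conf b d n) (m : nat) : seq (seq (Lam b d)) :=
  if m is m'.+1 then
    [seq rcons a j | a <- Tgen F m', j <- enum (Woff F a)]
  else [:: [::]].

Definition binw {R : realType} (T : finType) (p : R) (B : {set T}) : R :=
  p ^+ #|B| * (1 - p) ^+ #|~: B|.

Definition confw {R : realType} b d n (p : R) (F : Conf b d n) : R :=
  \prod_(v : Node b d n) binw p (F v).

Definition Pempty {R : realType} b d (p : R) (n : nat) : R :=
  \sum_(F : Conf b d n | Tgen F n == [::]) confw p F.

(* P(extinction) = P(U_n {T_n = empty}) = lim_n P(T_n = empty) (increasing events) *)
Definition Pext {R : realType} b d (p : R) : R := limn (Pempty b d p).

(* The event T_k^{(s)} = T_k cap Y belongs to D_{b,k}:
   some a in (Lambda_b)^{k-2} with a (Lambda_b)^2 subset of T_k cap Y *)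
Definition inD b d k (F : Conf b d k) (Y : {set k.-tuple (Lam b d)}) : bool :=
  [exists a : (k.-2).-tuple (Lam b d), [forall x : Lam b d, forall y : Lam b d,
     let w := (val a ++ [:: x; y]) in
     (w \in Tgen F k) && (w \in [seq val t | t in Y])]].

(* g_{D_{b,k}}(s) = P(T_k^{(s)} notin D_{b,k}), Y independent of T with
   P(Y = B) = (1-s)^|B| s^|complement B| *)
Definition gD {R : realType} b d (p s : R) (k : nat) : R :=
  \sum_(F : Conf b d k)
    \sum_(Y : {set k.-tuple (Lam b d)} | ~~ inD F Y)
      confw p F * binw (1 - s) Y.

From HB Require Import structures.
From mathcomp Require Import all_boot all_order all_algebra.
From mathcomp Require Import all_classical all_reals all_analysis.
From mathcomp Require Import ring.
Import Order.TTheory GRing.Theory Num.Theory.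
Import numFieldNormedType.Exports.
Set Implicit Arguments. Unset Strict Implicit. Unset Printing Implicit Defensive.
Local Open Scope ring_scope.

(* Write N = b^d and f y = (p y + 1 - p)^N for the offspring generating function.
   Conditionally on the first m generations, the offspring sets below distinct
   words of generation m are independent; hence E[y^#T_m] = f^m(y), and in
   particular P(T_n = empty) = f^n(0).  Given a word a of generation m, the event
   a(Lambda_b)^2 is contained in T_{m+2} and in Y has probability
   q = p^N (p^N)^N (1-s)^(N^2) > 0, independently over a, so that
   g_D(m+2) = E[(1-q)^#T_m] = f^m(1-q).  Finally f is continuous and nondecreasing
   with f 1 = 1, and f x < x between its least fixed point and 1, so f^m(x)
   tends to that fixed point, lim f^n(0), for every x in [0, 1). *)

Section ProductExpectation.
Variables (R : comPzRingType) (I J : finType) (w : J -> R).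
Hypothesis w_sum1 : \sum_j w j = 1.

Definition Eprod (X : {ffun I -> J} -> R) : R :=
  \sum_(f : {ffun I -> J}) (\prod_i w (f i)) * X f.

Definition merge_on (S : {set I}) (f g : {ffun I -> J}) : {ffun I -> J} :=
  [ffun i => if i \in S then g i else f i].

Definition depends_on T (S : {set I}) (X : {ffun I -> J} -> T) :=
  forall f g : {ffun I -> J}, {in S, f =1 g} -> X f = X g.

Lemma eq_Eprod X Y : X =1 Y -> Eprod X = Eprod Y.
Proof. by move=> eXY; apply: eq_bigr => f _; rewrite eXY. Qed.

Lemma EprodB X Y : Eprod (fun f => X f - Y f) = Eprod X - Eprod Y.
Proof. by rewrite -sumrB; apply: eq_bigr => f _; rewrite mulrBr. Qed.

Lemma EprodMr X c : Eprod (fun f => X f * c) = Eprod X * c.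
Proof. by rewrite /Eprod mulr_suml; apply: eq_bigr => f _; rewrite mulrA. Qed.

Lemma sum_prod_weights : \sum_(f : {ffun I -> J}) \prod_i w (f i) = 1.
Proof.
rewrite -(bigA_distr_bigA (fun _ j => w j)) /=.
by rewrite big1 // => i _; rewrite w_sum1.
Qed.

Lemma Eprod_cst c : Eprod (fun=> c) = c.
Proof. by rewrite /Eprod -mulr_suml sum_prod_weights mul1r. Qed.

Lemma Eprod_1subMr X c : Eprod (fun f => 1 - X f * c) = 1 - Eprod X * c.
Proof. by rewrite EprodB Eprod_cst EprodMr. Qed.

Lemma merge_onK S f g : merge_on S (merge_on S f g) (merge_on S g f) = f.
Proof. by apply/ffunP => i; rewrite !ffunE; case: (i \in S). Qed.

Lemma Eprod_resample S X :
  Eprod X = Eprod (fun f => Eprod (fun g => X (merge_on S f g))).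
Proof.
transitivity (\sum_(f : {ffun I -> J}) \sum_(g : {ffun I -> J})
   ((\prod_i w (f i)) * X f) * (\prod_i w (g i))).
  by apply: eq_bigr => f _; rewrite -mulr_sumr sum_prod_weights mulr1.
rewrite pair_bigA /=.
pose swap fg := (merge_on S fg.1 fg.2, merge_on S fg.2 fg.1).
have swapK : involutive swap by case=> f g; rewrite /swap /= !merge_onK.
rewrite (reindex_inj (inv_inj swapK)) -(pair_bigA _ (fun f g =>
  (\prod_i w (merge_on S f g i) * X (merge_on S f g)) *
  \prod_i w (merge_on S g f i))) /=.
apply: eq_bigr => f _; rewrite mulr_sumr; apply: eq_bigr => g _.
rewrite mulrAC mulrA; congr (_ * _).
rewrite -!big_split /=; apply: eq_bigr => i _; rewrite !ffunE.
by case: (i \in S); rewrite // mulrC.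
Qed.

Lemma Eprod_indepM S X Y : depends_on S X -> depends_on (~: S) Y ->
  Eprod (fun f => X f * Y f) = Eprod X * Eprod Y.
Proof.
move=> dX dY; rewrite (Eprod_resample S).
transitivity (Eprod (fun f => Eprod X * Y f)).
  apply: eq_Eprod => f; rewrite -EprodMr; apply: eq_Eprod => g; congr (_ * _).
    by apply: dX => i iS; rewrite ffunE iS.
  by apply: dY => i; rewrite inE ffunE => /negbTE ->.
by rewrite mulrC -EprodMr; apply: eq_Eprod => f; rewrite mulrC.
Qed.

Lemma Eprod_indep_prod (A : finType) (S : A -> {set I}) (X : A -> {ffun I -> J} -> R) :
  (forall a, depends_on (S a) (X a)) ->
  (forall a a' i, i \in S a -> i \in S a' -> a = a') ->
  Eprod (fun f => \prod_a X a f) = \prod_a Eprod (X a).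
Proof.
move=> dX disjS.
elim: (index_enum A) (index_enum_uniq A) => [_|a r IH /andP[a_r r_uniq]].
  by rewrite big_nil -[RHS](Eprod_cst 1); apply: eq_Eprod => f; rewrite big_nil.
rewrite big_cons -IH // -(Eprod_indepM (S := S a)) //.
  by apply: eq_Eprod => f; rewrite big_cons.
move=> f g efg; apply: eq_big_seq => a' a'r; apply: dX => i ia'.
apply: efg; rewrite inE; apply/negP => ia.
by move: a_r; rewrite (disjS _ _ _ ia ia') a'r.
Qed.

Lemma Eprod_coord i0 (phi : J -> R) :
  Eprod (fun f => phi (f i0)) = \sum_j w j * phi j.
Proof.
transitivity (\sum_(f : {ffun I -> J})
    \prod_i (w (f i) * (if i == i0 then phi (f i) else 1))).
  apply: eq_bigr => f _; rewrite big_split /= (bigD1 i0) //=; congr (_ * _).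
  by rewrite (bigD1 i0) //= eqxx big1 ?mulr1 // => i /negbTE ->.
rewrite -(bigA_distr_bigA (fun i j => w j * (if i == i0 then phi j else 1))) /=.
rewrite (bigD1 i0) //= [X in _ * X]big1 ?mulr1.
  by apply: eq_bigr => j _; rewrite eqxx.
by move=> i /negbTE i_i0; under eq_bigr do rewrite i_i0 mulr1.
Qed.

Lemma Eprod_prod_coord (A : finType) (iota : A -> I) (phi : A -> J -> R) :
  injective iota ->
  Eprod (fun f => \prod_a phi a (f (iota a))) = \prod_a \sum_j w j * phi a j.
Proof.
move=> iota_inj; rewrite (Eprod_indep_prod (S := fun a => [set iota a])).
- by apply: eq_bigr => a _; apply: Eprod_coord.
- by move=> a f g efg; rewrite efg // set11.
- by move=> a a' i; rewrite !inE => /eqP -> /eqP /iota_inj.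
Qed.

End ProductExpectation.

Arguments Eprod_cst {R I J w} w_sum1 c.

Lemma natr_forall (R : comPzSemiRingType) (T : finType) (P : pred T) :
  ([forall x, P x]%:R : R) = \prod_x (P x)%:R.
Proof.
have [/forallP allP | ] := boolP [forall x, P x].
  by rewrite big1 // => x _; rewrite allP.
rewrite negb_forall => /existsP [x /negbTE Px].
by rewrite (bigD1 x) //= Px mul0r.
Qed.

Definition binom_pgf (R : pzRingType) (p : R) (N : nat) (y : R) : R :=
  (p * y + (1 - p)) ^+ N.

Section BinomialSubsets.
Variables (R : realType) (T : finType) (q : R).

Definition bern (b : bool) : R := if b then q else 1 - q.

Lemma bern_sum1 : \sum_b bern b = 1.
Proof. by rewrite big_bool /= addrC subrK. Qed.

Lemma binw_bern (B : {set T}) : binw q B = \prod_x bern (x \in B).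
Proof.
rewrite /binw (bigID (mem B)) /= -!prodr_const; congr (_ * _).
  by apply: eq_big => x //= ->.
by apply: eq_big => x; rewrite ?inE // => /negbTE ->.
Qed.

Lemma sum_binwE (X : {set T} -> R) :
  \sum_(B : {set T}) binw q B * X B = Eprod bern (fun f => X [set x | f x]).
Proof.
rewrite (reindex (fun f : {ffun T -> bool} => [set x | f x])) /=.
  apply: eq_bigr => f _; rewrite binw_bern; congr (_ * _).
  by apply: eq_bigr => x _; rewrite inE.
exists (fun B : {set T} => [ffun x => x \in B]) => [f _ | B _].
  by apply/ffunP => x; rewrite ffunE inE.
by apply/setP => x; rewrite !inE ffunE.
Qed.

Lemma sum_binw_prod (phi : T -> bool -> R) :
  \sum_(B : {set T}) binw q B * \prod_x phi x (x \in B) =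
  \prod_x (q * phi x true + (1 - q) * phi x false).
Proof.
transitivity (\prod_x \sum_b bern b * phi x b).
  rewrite sum_binwE -(Eprod_prod_coord bern_sum1 (iota := id)) //.
  by apply: eq_Eprod => f; apply: eq_bigr => x _; rewrite inE.
by apply: eq_bigr => x _; rewrite big_bool.
Qed.

Lemma binw_sum1 : \sum_(B : {set T}) binw q B = 1.
Proof.
have := sum_binw_prod (fun _ _ => 1); rewrite !mulr1 addrC subrK prodr_const expr1n.
by under eq_bigr do rewrite mulr1.
Qed.

Lemma binw_pgf y :
  \sum_(B : {set T}) binw q B * \prod_x (if x \in B then y else 1) =
  binom_pgf q #|T| y.
Proof. by rewrite (sum_binw_prod (fun _ b => if b then y else 1)) mulr1 prodr_const. Qed.

Lemma binw_full : \sum_(B : {set T}) binw q B * (B == [set: T])%:R = q ^+ #|T|.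
Proof.
rewrite (bigD1 [set: T]) //= eqxx mulr1 big1 ?addr0; last first.
  by move=> B /negbTE ->; rewrite mulr0.
by rewrite /binw finset.setCT cards0 expr0 mulr1 cardsT.
Qed.

End BinomialSubsets.

Section GaltonWatsonTree.
Variables (b d n : nat).

Definition word (v : Node b d n) : seq (Lam b d) := val (tagged v).

Definition node_of m (lt_mn : (m < n)%N) (t : m.-tuple (Lam b d)) : Node b d n :=
  existT _ (Ordinal lt_mn) t.

Lemma size_word v : size (word v) = tag v.
Proof. exact: size_tuple. Qed.

Lemma node_of_word m (lt_mn : (m < n)%N) (t : m.-tuple (Lam b d)) v :
  word v = t -> v = node_of lt_mn t.
Proof.
case: v => [[i lt_in] u]; rewrite /word /= => eut.
have eim : i = m by have := size_tuple u; rewrite eut size_tuple.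
subst i; rewrite /node_of (bool_irrelevance lt_in lt_mn); congr existT.
exact: val_inj.
Qed.

Lemma Woff_node_of m (lt_mn : (m < n)%N) (t : m.-tuple (Lam b d)) F :
  Woff F t = F (node_of lt_mn t).
Proof.
apply/setP => j; rewrite inE; apply/existsP/idP => [[v /andP[/eqP evt jFv]]|].
  by rewrite -(node_of_word lt_mn evt).
by exists (node_of lt_mn t); rewrite eqxx.
Qed.

Lemma eq_Woff (F G : Conf b d n) a :
  (forall v, word v = a -> F v = G v) -> Woff F a = Woff G a.
Proof.
move=> eFG; apply/setP => j; rewrite !inE.
by apply/existsP/existsP => -[v /andP[/eqP eva jv]]; exists v;
  rewrite -eva eqxx /= ?(eFG v) // -(eFG v).
Qed.

Lemma size_Tgen (F : Conf b d n) m w : w \in Tgen F m -> size w = m.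
Proof.
elim: m w => [|m IH] w /=; first by rewrite inE => /eqP ->.
by case/allpairsPdep => a [j [aT _ ->]]; rewrite size_rcons IH.
Qed.

Lemma mem_Tgen_rcons (F : Conf b d n) m w j :
  (rcons w j \in Tgen F m.+1) = (w \in Tgen F m) && (j \in Woff F w).
Proof.
apply/allpairsPdep/andP => [[a [i [aT iW /rcons_inj [-> ->]]]]|[wT jW]].
  by rewrite -mem_enum.
by exists w, j; rewrite mem_enum.
Qed.

Lemma eq_Tgen (F G : Conf b d n) m :
  (forall v : Node b d n, (tag v < m)%N -> F v = G v) -> Tgen F m = Tgen G m.
Proof.
elim: m => [//|m IH] eFG /=.
rewrite IH => [|v lt_vm]; last exact/eFG/ltnW.
elim: (Tgen G m) (@size_Tgen G m) => //= a s IHs szs.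
rewrite IHs => [|w ws]; last exact/szs/mem_behead.
rewrite (@eq_Woff F G a) // => v eva; apply: eFG.
by rewrite -size_word eva szs ?mem_head.
Qed.

Lemma Tgen_nilE (F : Conf b d n) m :
  (Tgen F m == [::]) = [forall t : m.-tuple (Lam b d), val t \notin Tgen F m].
Proof.
apply/eqP/forallP => [-> t // | notT].
case eT: (Tgen F m) => [|w s] //; have : w \in Tgen F m by rewrite eT mem_head.
by move=> wT; have := notT (Tuple (introT eqP (size_Tgen wT))); rewrite wT.
Qed.

End GaltonWatsonTree.

Lemma big_tuple_rcons (R : comPzSemiRingType) (T : finType) m (G : m.+1.-tuple T -> R) :
  \prod_(t : m.+1.-tuple T) G t =
  \prod_(t : m.-tuple T) \prod_(j : T) G [tuple of rcons t j].
Proof.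
rewrite pair_bigA /=.
have rcons_bij : bijective (fun tj : m.-tuple T * T => [tuple of rcons tj.1 tj.2]).
  apply: inj_card_bij; last by rewrite card_prod !card_tuple expnS mulnC.
  by move=> [t j] [t' j'] /(congr1 val) /rcons_inj [/val_inj -> ->].
by rewrite (reindex _ (onW_bij _ rcons_bij)).
Qed.

Section GenerationPgf.
Variables (R : realType) (b d n : nat) (p : R).
Local Notation N := #|Lam b d|.
Local Notation E := (Eprod (binw p)).

Definition gen_pgf m (y : R) : R :=
  E (fun F : Conf b d n =>
    \prod_(t : m.-tuple (Lam b d)) (if val t \in Tgen F m then y else 1)).

Lemma Eprod_branching m (H : m.-tuple (Lam b d) -> Conf b d n -> R) :
  (forall t, depends_on [set v | take m (word v) == val t] (H t)) ->
  E (fun F : Conf b d n => \prod_t (if val t \in Tgen F m then H t F else 1)) =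
  E (fun F : Conf b d n => \prod_t (if val t \in Tgen F m then E (H t) else 1)).
Proof.
move=> dH; have w_sum1 := binw_sum1 (Lam b d) p.
rewrite (Eprod_resample w_sum1 [set v : Node b d n | (m <= tag v)%N]).
apply: eq_Eprod => F.
transitivity (E (fun G => \prod_t (if val t \in Tgen F m then H t G else 1))).
  apply: eq_Eprod => G; apply: eq_bigr => t _.
  rewrite (@eq_Tgen _ _ _ _ F) => [|v lt_vm]; last by rewrite ffunE inE leqNgt lt_vm.
  case: ifP => // _; apply: dH => v; rewrite inE => /eqP evt.
  have : (m <= size (word v))%N by rewrite -(size_tuple t) -evt size_take_min geq_minr.
  by rewrite ffunE inE size_word => ->.
rewrite (Eprod_indep_prod w_sum1 (S := fun t => [set v | take m (word v) == val t])).
- by apply: eq_bigr => t _; case: (val t \in _); rewrite ?(Eprod_cst w_sum1).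
- by move=> t G G' eGG'; case: ifP => // _; apply: dH.
- by move=> t t' v; rewrite !inE => /eqP evt /eqP evt'; apply: val_inj; rewrite -evt.
Qed.

Lemma gen_pgf0 y : gen_pgf 0 y = y.
Proof.
rewrite -{2}(Eprod_cst (I := Node b d n) (binw_sum1 (Lam b d) p) y).
apply: eq_Eprod => F; rewrite (eq_bigr (fun=> y)) => [|t _]; last by rewrite tuple0.
by rewrite prodr_const card_tuple expr1.
Qed.

Lemma gen_pgfS m y : (m < n)%N -> gen_pgf m.+1 y = gen_pgf m (binom_pgf p N y).
Proof.
move=> lt_mn; rewrite /gen_pgf.
transitivity (E (fun F => \prod_(t : m.-tuple (Lam b d)) (if val t \in Tgen F m then
   \prod_j (if j \in F (node_of lt_mn t) then y else 1) else 1))).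
  apply: eq_Eprod => F; rewrite big_tuple_rcons; apply: eq_bigr => t _.
  case: ifP => tT; last by rewrite big1 // => j _; rewrite mem_Tgen_rcons tT.
  by apply: eq_bigr => j _; rewrite mem_Tgen_rcons tT (Woff_node_of lt_mn).
rewrite Eprod_branching => [|t F G eFG]; last first.
  by rewrite eFG // inE take_oversize ?size_tuple.
apply: eq_Eprod => F; apply: eq_bigr => t _; case: ifP => // _.
pose phi (B : {set Lam b d}) := \prod_j (if j \in B then y else 1).
by rewrite (Eprod_coord (binw_sum1 _ p) (node_of lt_mn t) phi) binw_pgf.
Qed.

Lemma gen_pgf_iter m y : (m <= n)%N -> gen_pgf m y = iter m (binom_pgf p N) y.
Proof.
elim: m y => [|m IH] y le_mn; first exact: gen_pgf0.
by rewrite gen_pgfS // IH 1?ltnW // iterSr.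
Qed.

End GenerationPgf.

Lemma Pempty_iter (R : realType) b d (p : R) m :
  Pempty b d p m = iter m (binom_pgf p #|Lam b d|) 0.
Proof.
rewrite -(@gen_pgf_iter _ b d m) // /Pempty /gen_pgf /Eprod big_mkcond /=.
apply: eq_bigr => F _; rewrite Tgen_nilE.
have -> : \prod_(t : m.-tuple (Lam b d)) (if val t \in Tgen F m then 0 else 1) =
          [forall t : m.-tuple (Lam b d), val t \notin Tgen F m]%:R :> R.
  by rewrite natr_forall; apply: eq_bigr => t _; case: ifP.
by case: ifP; rewrite ?mulr1 ?mulr0.
Qed.

Section TwoLevelSubtrees.
Variables (R : realType) (b d m : nat).
Local Notation N := #|Lam b d|.
Local Notation Conf := (Conf b d m.+2).

Definition subtree_in (F : Conf) (a : m.-tuple (Lam b d)) : bool :=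
  [forall x, forall y, rcons (rcons (val a) x) y \in Tgen F m.+2].

Definition extend2 (a : m.-tuple (Lam b d)) x y : m.+2.-tuple (Lam b d) :=
  [tuple of rcons (rcons a x) y].

Definition full_two_levels (F : Conf) (a : seq (Lam b d)) : bool :=
  (Woff F a == [set: Lam b d]) && [forall x, Woff F (rcons a x) == [set: Lam b d]].

Lemma extend2_inj a : injective (fun xy => extend2 a xy.1 xy.2).
Proof.
by move=> [x y] [x' y'] /(congr1 val) /rcons_inj [] /rcons_inj [] -> ->.
Qed.

Lemma inD_extend2 (F : Conf) Y :
  inD F Y = [exists a, [forall x, forall y,
    (rcons (rcons (val a) x) y \in Tgen F m.+2) && (extend2 a x y \in Y)]].
Proof.
apply: eq_existsb => a; apply: eq_forallb => x; apply: eq_forallb => y /=.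
have -> : val a ++ [:: x; y] = val (extend2 a x y) by rewrite /= -!cats1 -catA.
by rewrite (fintype.mem_image val_inj).
Qed.

Lemma subtree_inE (F : Conf) (a : m.-tuple (Lam b d)) : (0 < N)%N ->
  subtree_in F a = (val a \in Tgen F m) && full_two_levels F a.
Proof.
case/card_gt0P => x0 _; rewrite /subtree_in /full_two_levels.
apply/forallP/andP => [inT | [aT /andP[/eqP Wa /forallP Wax]]]; last first.
  by move=> x; apply/forallP => y; rewrite !mem_Tgen_rcons aT Wa (eqP (Wax x)) !inE.
have inT_xy x y :
    (val a \in Tgen F m) && (x \in Woff F a) && (y \in Woff F (rcons a x)).
  by have := forallP (inT x) y; rewrite !mem_Tgen_rcons.
split; first by case/andP: (inT_xy x0 x0) => /andP[].
apply/andP; split.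
  by apply/eqP/setP => x; rewrite finset.in_setT; case/andP: (inT_xy x x0) => /andP[].
apply/forallP => x; apply/eqP/setP => y.
by rewrite finset.in_setT; case/andP: (inT_xy x y).
Qed.

Lemma full_two_levels_depends (a : m.-tuple (Lam b d)) :
  depends_on [set v | take m (word v) == val a] (fun F : Conf => full_two_levels F a).
Proof.
move=> F G eFG.
have eW w : take m w = a -> Woff F w = Woff G w.
  by move=> taw; apply: eq_Woff => v evw; apply: eFG; rewrite inE evw taw.
rewrite /full_two_levels eW ?take_oversize ?size_tuple //; congr (_ && _).
by apply: eq_forallb => x; rewrite eW // -cats1 take_size_cat ?size_tuple.
Qed.

Lemma prob_notin_D (s : R) (F : Conf) :
  \sum_(Y : {set m.+2.-tuple (Lam b d)}) binw (1 - s) Y * (~~ inD F Y)%:R =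
  \prod_(a : m.-tuple (Lam b d)) (1 - (subtree_in F a)%:R * (1 - s) ^+ (N * N)).
Proof.
have bern_sum1 := bern_sum1 (1 - s).
pose inY (f : {ffun m.+2.-tuple (Lam b d) -> bool}) a :=
  \prod_(xy : Lam b d * Lam b d) (f (extend2 a xy.1 xy.2))%:R : R.
rewrite sum_binwE.
transitivity (Eprod (bern (1 - s)) (fun f => \prod_a (1 - inY f a * (subtree_in F a)%:R))).
  apply: eq_Eprod => f; rewrite inD_extend2 negb_exists natr_forall.
  have natr_negb (P : bool) : (~~ P)%:R = 1 - P%:R :> R by case: P; rewrite ?subrr ?subr0.
  apply: eq_bigr => a _; rewrite natr_negb.
  congr (1 - _); rewrite /inY /subtree_in.
  rewrite -(pair_bigA _ (fun x y => (f (extend2 a x y))%:R)).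
  rewrite !natr_forall -big_split; apply: eq_bigr => x _ /=.
  rewrite !natr_forall -big_split; apply: eq_bigr => y _ /=.
  by rewrite inE mulrC -natrM mulnb.
rewrite (Eprod_indep_prod bern_sum1
  (S := fun a => [set t : m.+2.-tuple (Lam b d) | take m t == val a])).
- apply: eq_bigr => a _; rewrite Eprod_1subMr // mulrC; congr (1 - _ * _).
  rewrite (Eprod_prod_coord bern_sum1 (fun _ (c : bool) => c%:R : R)); last first.
    exact: extend2_inj.
  rewrite (eq_bigr (fun=> 1 - s)) => [|xy _]; last by rewrite big_bool /= mulr1 mulr0 addr0.
  by rewrite prodr_const card_prod.
- move=> a f g efg; congr (1 - _ * _); apply: eq_bigr => xy _; rewrite efg // inE.
  by rewrite /= -!cats1 -catA take_size_cat ?size_tuple.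
- by move=> a a' t; rewrite !inE => /eqP eta /eqP eta'; apply: val_inj; rewrite -eta.
Qed.

Lemma prob_full_two_levels (p : R) (a : m.-tuple (Lam b d)) :
  Eprod (binw p) (fun F : Conf => (full_two_levels F a)%:R) = p ^+ N * (p ^+ N) ^+ N.
Proof.
have w_sum1 := binw_sum1 (Lam b d) p.
have lt_m : (m < m.+2)%N by []; have lt_m1 : (m.+1 < m.+2)%N by [].
pose child x := node_of lt_m1 [tuple of rcons a x].
pose is_full (B : {set Lam b d}) : R := (B == [set: Lam b d])%:R.
transitivity (Eprod (binw p) (fun F : Conf =>
    is_full (F (node_of lt_m a)) * \prod_x is_full (F (child x)))).
  apply: eq_Eprod => F; rewrite /full_two_levels -mulnb natrM natr_forall.
  rewrite (Woff_node_of lt_m); congr (_ * _); apply: eq_bigr => x _.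
  by rewrite (Woff_node_of lt_m1 [tuple of rcons a x]).
rewrite (Eprod_indepM w_sum1 (S := [set node_of lt_m a])).
- rewrite (Eprod_coord w_sum1 _ is_full) (Eprod_prod_coord w_sum1 (fun=> is_full)).
    by rewrite binw_full prodr_const.
  by move=> x y /(congr1 (fun v => word v)) /rcons_inj [].
- by move=> F G eFG; rewrite eFG // set11.
- move=> F G eFG; apply: eq_bigr => x _; rewrite eFG // !inE.
  apply/eqP => /(congr1 (fun v => size (word v))).
  by rewrite !size_tuple => /eqP; rewrite eqn_leq ltnn.
Qed.

End TwoLevelSubtrees.

Definition subtree_prob (R : realType) N (p s : R) : R :=
  p ^+ N * (p ^+ N) ^+ N * (1 - s) ^+ (N * N).

Lemma subtree_prob_gt0 (R : realType) N (p s : R) :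
  0 < p -> s < 1 -> 0 < subtree_prob N p s.
Proof. by move=> p_gt0 s_lt1; rewrite !mulr_gt0 ?exprn_gt0 ?subr_gt0. Qed.

Lemma subtree_prob_le1 (R : realType) N (p s : R) :
  0 <= p <= 1 -> 0 <= s <= 1 -> subtree_prob N p s <= 1.
Proof.
have exp_unit (x : R) k : 0 <= x <= 1 -> 0 <= x ^+ k <= 1.
  by case/andP=> x_ge0 x_le1; rewrite exprn_ge0 ?exprn_ile1.
move=> /(exp_unit _ N) pN /andP[s_ge0 s_le1].
have /andP[pN_ge0 pN_le1] := pN; have /andP[pNN_ge0 pNN_le1] := exp_unit _ N pN.
have /andP[sNN_ge0 sNN_le1] : 0 <= (1 - s) ^+ (N * N) <= 1.
  by rewrite exp_unit // subr_ge0 s_le1 lerBlDr lerDl.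
by rewrite !mulr_ile1 ?mulr_ge0.
Qed.

Lemma gD_iter (R : realType) b d (p s : R) m : (0 < #|Lam b d|)%N ->
  gD b d p s m.+2 =
  iter m (binom_pgf p #|Lam b d|) (1 - subtree_prob #|Lam b d| p s).
Proof.
move=> N_gt0; rewrite -(@gen_pgf_iter _ b d m.+2) 1?leqW // /gD /gen_pgf /subtree_prob.
set c := (1 - s) ^+ _.
transitivity (Eprod (binw p) (fun F : Conf b d m.+2 => \prod_(a : m.-tuple (Lam b d))
    (if val a \in Tgen F m then 1 - (full_two_levels F a)%:R * c else 1))).
  apply: eq_bigr => F _.
  transitivity (confw p F * \sum_Y binw (1 - s) Y * (~~ inD F Y)%:R).
    rewrite mulr_sumr big_mkcond; apply: eq_bigr => Y _.
    by case: ifP; rewrite ?mulr1 ?mulr0.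
  rewrite prob_notin_D; congr (_ * _); apply: eq_bigr => a _.
  by rewrite subtree_inE //; case: ifP; rewrite ?mul0r ?subr0.
rewrite Eprod_branching => [|a]; last first.
  by move=> F G /full_two_levels_depends ->.
apply: eq_Eprod => F; apply: eq_bigr => a _; case: ifP => // _.
by rewrite Eprod_1subMr ?binw_sum1 // prob_full_two_levels.
Qed.

Lemma card_Lam b d : #|Lam b d| = (b ^ d)%N.
Proof. by rewrite card_ffun !card_ord. Qed.

Local Open Scope classical_set_scope.

Lemma cvg_iter_fixpoint (R : realType) (f : R -> R) x l :
  continuous f -> (fun n => iter n f x) @ \oo --> l -> f l = l.
Proof.
move=> f_cont iter_l.
have iterS_l : (fun n => iter n.+1 f x) @ \oo --> l.
  by rewrite (cvg_shiftS (fun n => iter n f x)).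
have iterS_fl : (fun n => iter n.+1 f x) @ \oo --> f l.
  by apply: continuous_cvg; [exact: f_cont | exact: iter_l].
exact: cvg_unique iterS_fl iterS_l.
Qed.

Section IterationOnUnitInterval.
Variables (R : realType) (f : R -> R).
Hypothesis f_cont : continuous f.
Hypothesis f_nondecreasing : forall x y, 0 <= x -> x <= y -> f x <= f y.
Hypothesis f0_ge0 : 0 <= f 0.
Hypothesis f1 : f 1 = 1.
Hypothesis f_lt_id : forall l x, 0 <= l -> f l = l -> l < x < 1 -> f x < x.

Let l := limn (fun n => iter n f 0).

Lemma iter_ge0 n x : 0 <= x -> 0 <= iter n f x.
Proof.
move=> x_ge0; elim: n => //= n IH.
exact: le_trans f0_ge0 (f_nondecreasing (lexx 0) IH).
Qed.

Lemma iter_nondecreasing n x y : 0 <= x -> x <= y -> iter n f x <= iter n f y.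
Proof. by move=> x_ge0 le_xy; elim: n => //= n IH; apply/f_nondecreasing/IH/iter_ge0. Qed.

Lemma iter_le1 n x : 0 <= x <= 1 -> iter n f x <= 1.
Proof. by case/andP=> x_ge0 x_le1; rewrite -(iter_fix n f1); apply: iter_nondecreasing. Qed.

Lemma iter0_nondecreasing : {homo (fun n => iter n f 0) : n m / (n <= m)%N >-> n <= m}.
Proof. by apply/nondecreasing_seqP => n; rewrite iterSr; apply: iter_nondecreasing. Qed.

Lemma iter0_cvg : (fun n => iter n f 0) @ \oo --> l.
Proof.
apply: nondecreasing_is_cvgn iter0_nondecreasing _.
by exists 1 => _ [n _ <-]; rewrite iter_le1 // lexx ler01.
Qed.

Lemma lim_iter0_ge0 : 0 <= l.
Proof. exact: nondecreasing_cvgn_le iter0_nondecreasing iter0_cvg 0. Qed.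

Lemma lim_iter0_fixed : f l = l.
Proof. exact: cvg_iter_fixpoint f_cont iter0_cvg. Qed.

Lemma iter_cvg_below x : 0 <= x <= l -> (fun n => iter n f x) @ \oo --> l.
Proof.
case/andP=> x_ge0 x_le_l; apply: squeeze_cvgr iter0_cvg (cvg_cst l).
apply: nearW => n; rewrite iter_nondecreasing //=.
by rewrite -[X in _ <= X](iter_fix n lim_iter0_fixed) iter_nondecreasing.
Qed.

Lemma iter_cvg_above x : l < x < 1 -> (fun n => iter n f x) @ \oo --> l.
Proof.
case/andP=> lt_lx lt_x1.
have le_f_id y : l <= y -> y < 1 -> l <= f y <= y.
  rewrite le_eqVlt => /predU1P[<- _|lt_ly lt_y1].
    by rewrite lim_iter0_fixed lexx.
  rewrite -{1}lim_iter0_fixed f_nondecreasing ?lim_iter0_ge0 ?(ltW lt_ly) //=.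
  by rewrite ltW // (f_lt_id lim_iter0_ge0 lim_iter0_fixed) // lt_ly.
have iter_in n : l <= iter n f x <= x.
  elim: n => [|n /andP[le_l le_x]]; first by rewrite ltW ?lexx.
  have /andP[le_lf le_fy] := le_f_id _ le_l (le_lt_trans le_x lt_x1).
  by rewrite /= le_lf (le_trans le_fy le_x).
have iter_nonincreasing : {homo (fun n => iter n f x) : n m / (n <= m)%N >-> m <= n}.
  apply/nonincreasing_seqP => n /=; have /andP[le_l le_x] := iter_in n.
  by case/andP: (le_f_id _ le_l (le_lt_trans le_x lt_x1)).
have iter_cvg : cvgn (fun n => iter n f x).
  apply: nonincreasing_is_cvgn iter_nonincreasing _.
  by exists l => _ [n _ <-]; case/andP: (iter_in n).
set L := limn _ in iter_cvg.
have le_lL : l <= L by apply: limr_ge iter_cvg _; apply: nearW => n; case/andP: (iter_in n).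
have lt_L1 : L < 1.
  exact: le_lt_trans (nonincreasing_cvgn_ge iter_nonincreasing iter_cvg 0) lt_x1.
suff -> : l = L by [].
apply/eqP; rewrite eq_le le_lL leNgt; apply/negP => lt_lL.
have := f_lt_id lim_iter0_ge0 lim_iter0_fixed (x := L); rewrite lt_lL lt_L1.
by rewrite (cvg_iter_fixpoint f_cont iter_cvg) ltxx => /(_ isT).
Qed.

Lemma iter_cvg x : 0 <= x < 1 -> (fun n => iter n f x) @ \oo --> l.
Proof.
case/andP=> x_ge0 lt_x1; have [le_xl | lt_lx] := leP x l.
  by apply: iter_cvg_below; rewrite x_ge0.
by apply: iter_cvg_above; rewrite lt_lx.
Qed.
End IterationOnUnitInterval.

Section BinomialPgf.
Variables (R : realType) (p : R) (N : nat).
Hypotheses (p_gt0 : 0 < p) (p_le1 : p <= 1).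
Local Notation f := (binom_pgf p N).

Lemma binom_pgf_continuous : continuous f.
Proof.
move=> x; apply: (@continuous_comp _ _ _ (fun y => p * y + (1 - p)) (fun u => u ^+ N)).
  by apply: cvgD; [apply: cvgMl_tmp; exact: cvg_id | exact: cvg_cst].
exact: exprn_continuous.
Qed.

Let base_ge0 x : 0 <= x -> 0 <= p * x + (1 - p).
Proof. by move=> x_ge0; rewrite addr_ge0 ?mulr_ge0 ?subr_ge0 // ltW. Qed.

Let base_le x y : x <= y -> p * x + (1 - p) <= p * y + (1 - p).
Proof. by move=> le_xy; rewrite lerD2r ler_wpM2l // ltW. Qed.

Lemma binom_pgf_nondecreasing (x y : R) : 0 <= x -> x <= y -> f x <= f y.
Proof.
by move=> x_ge0 le_xy; rewrite lerXn2r ?nnegrE ?base_ge0 ?base_le ?(le_trans x_ge0).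
Qed.

Lemma binom_pgf0_ge0 : 0 <= f 0.
Proof. by apply: exprn_ge0; rewrite mulr0 add0r subr_ge0. Qed.

Lemma binom_pgf1 : f 1 = 1.
Proof. by rewrite /binom_pgf mulr1 addrC subrK expr1n. Qed.

Lemma binom_pgf_sub_id (x : R) :
  f x - x = (1 - x) * (1 - p * \sum_(i < N) (p * x + (1 - p)) ^+ i).
Proof.
rewrite /binom_pgf; set u := p * x + (1 - p).
have -> : u ^+ N = (u - 1) * \sum_(i < N) u ^+ i + 1 by rewrite -subrX1 subrK.
by rewrite /u; ring.
Qed.

(* The sum in [binom_pgf_sub_id] is strictly increasing in [x], so
   [f x - x] changes sign only once on [0, 1). *)
Lemma binom_pgf_lt_id (l x : R) : (1 < N)%N ->
  0 <= l -> f l = l -> l < x < 1 -> f x < x.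
Proof.
move=> N_gt1 l_ge0 fl /andP[lt_lx lt_x1].
have lt_l1 := lt_trans lt_lx lt_x1.
have sum_l : p * \sum_(i < N) (p * l + (1 - p)) ^+ i = 1.
  apply/eqP; have := binom_pgf_sub_id l; rewrite fl subrr => /esym/eqP.
  rewrite mulf_eq0 subr_eq0 => /orP[/eqP e1l|]; first by move: lt_l1; rewrite -e1l ltxx.
  by rewrite subr_eq0 eq_sym.
rewrite -subr_lt0 binom_pgf_sub_id pmulr_rlt0 ?subr_gt0 // subr_lt0 -[X in X < _]sum_l.
rewrite ltr_pM2l // -subr_gt0 -sumrB (bigD1 (Ordinal N_gt1)) //= !expr1.
apply: ltr_wpDr; last by rewrite subr_gt0 ltrD2r ltr_pM2l.
apply: sumr_ge0 => i _.
have le_lx := ltW lt_lx.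
by rewrite subr_ge0 lerXn2r ?nnegrE ?base_ge0 ?base_le // (le_trans l_ge0).
Qed.

End BinomialPgf.

Theorem lemma4p7 (R : realType) (b d : nat) (p s : R) :
  (2 <= b)%N -> (1 <= d)%N ->
  0 <= p -> p <= 1 -> 1 < p * (b ^ d)%:R ->
  0 < s -> s < 1 ->
  gD b d p s @ \oo --> Pext b d p.
Proof.
move=> b_ge2 d_ge1 p_ge0 p_le1 supercritical s_gt0 s_lt1.
set N := #|Lam b d|.
have N_gt1 : (1 < N)%N by rewrite /N card_Lam (leq_ltn_trans d_ge1 (ltn_expl d b_ge2)).
have p_gt0 : 0 < p.
  rewrite lt_neqAle p_ge0 andbT; apply: contraTneq supercritical => <-.
  by rewrite mul0r ltr10.
set q := subtree_prob N p s.
have q_gt0 : 0 < q by apply: subtree_prob_gt0.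
have q_le1 : q <= 1 by apply: subtree_prob_le1; apply/andP; split => //; exact: ltW.
rewrite -(cvg_shiftn 2) /Pext (funext (Pempty_iter _ _ _)).
have -> : (fun n => gD b d p s (n + 2)) = (fun n => iter n (binom_pgf p N) (1 - q)).
  by apply: funext => n; rewrite addn2 gD_iter // ltnW.
apply: iter_cvg.
- exact: binom_pgf_continuous.
- exact: binom_pgf_nondecreasing.
- exact: binom_pgf0_ge0.
- exact: binom_pgf1.
- by move=> l x; apply: binom_pgf_lt_id.
- by rewrite subr_ge0 q_le1 ltrBlDr ltrDl.
Qed.
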